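(* Let $p\geq 5$ be a prime and let $r$ be an integer with $1\leq r\leq p-1$ such that $3r+1$ is a quadratic nonresidue modulo $p$. Then for all $n\geq 0$, $d_7(2pn+2r+1)\equiv 0\pmod 4$.
   Context: For each integer $k\geq 1$, the numbers $d_k(n)$ are defined by $\sum_{n\geq 0} d_k(n)q^n = \frac{f_2^k}{f_1^{3k+1}}$, where $f_r = \prod_{i\geq 1}(1-q^{ri})$. *)

From mathcomp Require Import all_boot all_order all_algebra.
Set Implicit Arguments. Unset Strict Implicit. Unset Printing Implicit Defensive.
Import GRing.Theory.
Local Open Scope ring_scope.

(* d_k(n) = coefficient of q^n in f_2^k / f_1^(3k+1), f_r = prod_{i>=1} (1-q^{ri}).
   Computed exactly via a truncation: only factors with index i <= n matter for
   the coefficient of q^n, and 1/(1-q^i) = sum_{j>=0} q^{ij} may be truncated to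
   j <= n. *)
Definition d (k n : nat) : int :=
  (\prod_(i < n) ((1 - 'X^(2 * i.+1)) ^+ k *
                  (\sum_(j < n.+1) 'X^(i.+1 * j)) ^+ (3 * k + 1)) : {poly int})`_n.

From mathcomp Require Import all_boot all_order all_algebra.
From mathcomp Require Import zify ring.
Set Implicit Arguments. Unset Strict Implicit. Unset Printing Implicit Defensive.
Import GRing.Theory.
Local Open Scope ring_scope.

(* Since (1 - x)^4 = (1 - x^2)^2 mod 4, f_1^4 = f_2^2 mod 4, so the generating
   function f_2^7 / f_1^22 of d_7 is congruent mod 4 to f_1^2 / f_2^5, which by
   Gauss' identity f_1^2 / f_2 = phi(-q) equals phi(-q) / f_2^4.  Mod 4 one has
   phi(-q) = phi(q^4) + 2 q psi(q^8), and mod 2 one has psi(q^8) = f_8^3 (Jacobi)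
   and f_2^4 = f_8, so psi(q^8) / f_2^4 = f_8^2 = f_16.  As phi(q^4) / f_2^4 is a
   series in q^2, d_7(2m+1) = 2 [q^(2m)] f_16 mod 4.  By Euler's pentagonal
   number theorem that coefficient vanishes unless 2m = 16 k(3k+1)/2, i.e. unless
   3m + 1 = (6k+1)^2; for m = pn + r this would make 3r + 1 a square mod p.
   Gauss', Jacobi's and Euler's identities are all specializations of a finite
   form of Jacobi's triple product, obtained from Rothe's q-binomial theorem;
   power series are handled as polynomials whose first N coefficients matter. *)

(** * Polynomials modulo (m, X^N) *)

(* For m = 0 this is equality of the first N coefficients. *)
Definition eqmodX (m : int) (N : nat) (p q : {poly int}) : bool :=
  [forall i : 'I_N, (m %| p`_i - q`_i)%Z].

Notation "p = q %[mod m , 'X^ N ]" := (eqmodX m N p q)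
  (at level 70, q at next level, N at level 2,
   format "p  =  q  %[mod  m ,  ''X^' N ]").

Lemma eqmodXP m N (p q : {poly int}) :
  reflect (forall i, (i < N)%N -> (m %| p`_i - q`_i)%Z) (p = q %[mod m, 'X^N]).
Proof.
apply: (iffP forallP) => [pq i iN | pq i]; last exact: pq.
exact: pq (Ordinal iN).
Qed.

Section TruncatedCongruence.
Variables (m : int) (N : nat).
Implicit Types p q r : {poly int}.

Lemma eqmodX_refl p : p = p %[mod m, 'X^N].
Proof. by apply/eqmodXP => i _; rewrite subrr dvdz0. Qed.

Lemma eqmodX_eq p q : p = q -> p = q %[mod m, 'X^N].
Proof. by move=> ->; apply: eqmodX_refl. Qed.

Lemma eqmodX_sym p q : p = q %[mod m, 'X^N] -> q = p %[mod m, 'X^N].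
Proof. by move/eqmodXP=> pq; apply/eqmodXP=> i /pq; rewrite -opprB rpredN. Qed.

Lemma eqmodX_trans q p r :
  p = q %[mod m, 'X^N] -> q = r %[mod m, 'X^N] -> p = r %[mod m, 'X^N].
Proof.
move=> /eqmodXP pq /eqmodXP qr; apply/eqmodXP => i iN.
by rewrite -(subrKA q`_i) rpredD ?pq ?qr.
Qed.

Lemma eqmodXD p1 q1 p2 q2 : p1 = q1 %[mod m, 'X^N] -> p2 = q2 %[mod m, 'X^N] ->
  p1 + p2 = q1 + q2 %[mod m, 'X^N].
Proof.
move=> /eqmodXP h1 /eqmodXP h2; apply/eqmodXP => i iN.
by rewrite !coefD opprD addrACA rpredD ?h1 ?h2.
Qed.

Lemma eqmodXN p q : p = q %[mod m, 'X^N] -> - p = - q %[mod m, 'X^N].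
Proof.
by move/eqmodXP=> pq; apply/eqmodXP => i /pq; rewrite !coefN -opprD rpredN.
Qed.

Lemma eqmodXM p1 q1 p2 q2 : p1 = q1 %[mod m, 'X^N] -> p2 = q2 %[mod m, 'X^N] ->
  p1 * p2 = q1 * q2 %[mod m, 'X^N].
Proof.
move=> /eqmodXP h1 /eqmodXP h2; apply/eqmodXP => i iN.
rewrite !coefM -sumrB; apply: rpred_sum => j _.
have [jN ijN] : (j < N)%N /\ (i - j < N)%N by have := ltn_ord j; lia.
rewrite -(subrKA (q1`_j * p2`_(i - j))) -mulrBl -mulrBr.
by apply: rpredD; [apply/dvdz_mulr/h1 | apply/dvdz_mull/h2].
Qed.

Lemma eqmodX_exp p q k : p = q %[mod m, 'X^N] -> p ^+ k = q ^+ k %[mod m, 'X^N].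
Proof.
move=> pq; elim: k => [|k IHk]; first exact: eqmodX_refl.
by rewrite !exprS; apply: eqmodXM.
Qed.

Lemma eqmodX_exp1 x k : x = 1 %[mod m, 'X^N] -> x ^+ k = 1 %[mod m, 'X^N].
Proof. by move=> x1; rewrite -(expr1n _ k); apply: eqmodX_exp. Qed.

Lemma eqmodX_sum (I : Type) (s : seq I) (P : pred I) (F G : I -> {poly int}) :
  (forall i, P i -> F i = G i %[mod m, 'X^N]) ->
  \sum_(i <- s | P i) F i = \sum_(i <- s | P i) G i %[mod m, 'X^N].
Proof. by apply: (big_ind2 (eqmodX m N)); [apply: eqmodX_refl | apply: eqmodXD]. Qed.

Lemma eqmodX_prod (I : Type) (s : seq I) (P : pred I) (F G : I -> {poly int}) :
  (forall i, P i -> F i = G i %[mod m, 'X^N]) ->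
  \prod_(i <- s | P i) F i = \prod_(i <- s | P i) G i %[mod m, 'X^N].
Proof. by apply: (big_ind2 (eqmodX m N)); [apply: eqmodX_refl | apply: eqmodXM]. Qed.

Lemma eqmodX_prod1 (I : Type) (s : seq I) (P : pred I) (F : I -> {poly int}) :
  (forall i, P i -> F i = 1 %[mod m, 'X^N]) ->
  \prod_(i <- s | P i) F i = 1 %[mod m, 'X^N].
Proof.
move=> F1; apply: (big_ind (fun p => p = 1 %[mod m, 'X^N])) => //.
  exact: eqmodX_refl.
by move=> p q p1 q1; rewrite -(mulr1 1); apply: eqmodXM.
Qed.

Lemma eqmodX_Xn k : (N <= k)%N -> 'X^k = 0 %[mod m, 'X^N].
Proof.
move=> Nk; apply/eqmodXP => i iN; have ik : (i < k)%N by lia.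
by rewrite coefXn coef0 subr0 ltn_eqF ?dvdz0.
Qed.

Lemma eqmodX_1subXn k : (N <= k)%N -> 1 - 'X^k = 1 %[mod m, 'X^N].
Proof.
move=> Nk; rewrite -[X in eqmodX _ _ _ X]subr0.
by apply: eqmodXD; [apply: eqmodX_refl | apply/eqmodXN/eqmodX_Xn].
Qed.

Lemma eqmodX_mulXn k p q :
  p = q %[mod m, 'X^N] -> 'X^k * p = 'X^k * q %[mod m, 'X^(N + k)].
Proof.
move/eqmodXP=> pq; apply/eqmodXP => i iNk; rewrite !coefXnM.
by case: ltnP => [_|ki]; [rewrite subrr dvdz0 | apply: pq; lia].
Qed.

Lemma eqmodX_mulXnK k p q :
  'X^k * p = 'X^k * q %[mod m, 'X^(N + k)] -> p = q %[mod m, 'X^N].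
Proof.
move/eqmodXP=> pq; apply/eqmodXP => i iN; have := pq (i + k)%N ltac:(lia).
by rewrite !coefXnM ltnNge leq_addl addnK.
Qed.

End TruncatedCongruence.

Section ModulusChangeAndCancellation.
Implicit Types p q : {poly int}.

Lemma eqmodX_leq m N N' p q :
  (N' <= N)%N -> p = q %[mod m, 'X^N] -> p = q %[mod m, 'X^N'].
Proof. by move=> N'N /eqmodXP pq; apply/eqmodXP => i iN'; apply: pq; lia. Qed.

Lemma eqmodX0 m N p q : p = q %[mod 0, 'X^N] -> p = q %[mod m, 'X^N].
Proof.
by move/eqmodXP=> pq; apply/eqmodXP => i /pq; rewrite dvd0z => /eqP ->; apply: dvdz0.
Qed.

Lemma eqmodX_addrMn (k N : nat) p q : p + q *+ k = p %[mod k%:R, 'X^N].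
Proof.
apply/eqmodXP => i _; rewrite coefD coefMn addrAC subrr add0r.
by apply/dvdzP; exists q`_i; rewrite mulr_natr.
Qed.

Lemma eqmodX_muln2 N p q :
  p = q %[mod 2, 'X^N] -> p *+ 2 = q *+ 2 %[mod 4, 'X^N].
Proof.
move/eqmodXP=> pq; apply/eqmodXP => i iN; rewrite !coefMn -mulrnBl.
by have [c ->] := dvdzP (pq i iN); apply/dvdzP; exists c; rewrite -mulr_natr; ring.
Qed.

Lemma eqmodX_half N p q :
  p *+ 2 = q *+ 2 %[mod 0, 'X^N] -> p = q %[mod 0, 'X^N].
Proof.
move/eqmodXP=> pq; apply/eqmodXP => i /pq.
by rewrite !coefMn -mulrnBl !dvd0z -mulr_natr mulf_eq0 orbF.
Qed.

Lemma eqmodX_mulr1 m N p x :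
  x = 1 %[mod 0, 'X^N] -> p * x = p %[mod m, 'X^N].
Proof.
move=> x1; rewrite -[X in eqmodX _ _ _ X]mulr1.
by apply: eqmodXM; [apply: eqmodX_refl | apply: eqmodX0].
Qed.

Lemma eqmodX_mulIr m N u v p q : u * v = 1 %[mod 0, 'X^N] ->
  p * u = q * u %[mod m, 'X^N] -> p = q %[mod m, 'X^N].
Proof.
move=> uv pq; apply: (eqmodX_trans (q := p * u * v)).
  by rewrite -mulrA; apply/eqmodX_sym/eqmodX_mulr1.
apply: (eqmodX_trans (q := q * u * v)); first exact: eqmodXM pq (eqmodX_refl _ _ _).
by rewrite -mulrA; apply: eqmodX_mulr1.
Qed.

Lemma eqmodX_mulNXnK m N e n p q :
  (- 'X^e) ^+ n * p = (- 'X^e) ^+ n * q %[mod m, 'X^(N + e * n)] ->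
  p = q %[mod m, 'X^N].
Proof.
move=> h; apply: (@eqmodX_mulXnK _ _ (e * n)).
have := eqmodXM (eqmodX_refl m (N + e * n) ((-1) ^+ n)) h.
by rewrite (exprNn ('X^e)) exprM !mulrA -expr2 sqrr_sign !mul1r.
Qed.

End ModulusChangeAndCancellation.

(** * Rothe's q-binomial theorem and the finite triple product *)

Section QBinomial.
Variable R : comNzRingType.
Implicit Types (Q x y : R) (m j : nat).

Definition qpoch Q k : R := \prod_(i < k) (1 - Q ^+ i.+1).

Lemma qpochS Q k : qpoch Q k.+1 = qpoch Q k * (1 - Q ^+ k.+1).
Proof. by rewrite /qpoch big_ord_recr. Qed.

Fixpoint qbin Q m j : R :=
  match m, j with
  | _, 0 => 1
  | 0, _.+1 => 0
  | m'.+1, j'.+1 => qbin Q m' j'.+1 + Q ^+ (m' - j') * qbin Q m' j'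
  end.

Lemma qbin0 Q m : qbin Q m 0 = 1. Proof. by case: m. Qed.

Lemma qbin_small Q m j : (m < j)%N -> qbin Q m j = 0.
Proof.
elim: m j => [|m IHm] [|j] //= ltmj.
by rewrite !IHm ?mulr0 ?addr0 //; lia.
Qed.

Lemma qbin_qpoch Q m j :
  (j <= m)%N -> qbin Q m j * qpoch Q j * qpoch Q (m - j) = qpoch Q m.
Proof.
elim: m j => [|m IHm] [|j] //= lejm.
- by rewrite subnn /qpoch !big_ord0 !mulr1.
- by rewrite subn0 /qpoch big_ord0 !mul1r.
have Hl : qbin Q m j.+1 * qpoch Q j.+1 * qpoch Q (m - j) =
          qpoch Q m * (1 - Q ^+ (m - j)).
  have [ltjm | ->] : (j < m)%N \/ j = m by lia.
    have -> : (m - j = (m - j.+1).+1)%N by lia.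
    by rewrite (qpochS Q (m - j.+1)) mulrA IHm.
  by rewrite qbin_small // subnn expr0 subrr !mul0r mulr0.
have Hr : Q ^+ (m - j) * qbin Q m j * qpoch Q j.+1 * qpoch Q (m - j) =
          Q ^+ (m - j) * qpoch Q m * (1 - Q ^+ j.+1).
  by rewrite -(IHm j) 1?qpochS; [ring | lia].
rewrite subSS !mulrDl Hl Hr qpochS.
have -> : Q ^+ m.+1 = Q ^+ (m - j) * Q ^+ j.+1 by rewrite -exprD; congr (_ ^+ _); lia.
ring.
Qed.

Definition rothe_term Q x y m j : R :=
  Q ^+ 'C(j, 2) * qbin Q m j * x ^+ j * y ^+ (m - j).

Lemma rothe_term_small Q x y m j : (m < j)%N -> rothe_term Q x y m j = 0.
Proof. by move=> ltmj; rewrite /rothe_term qbin_small // mulr0 !mul0r. Qed.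

Lemma rothe_term0S Q x y m : rothe_term Q x y m.+1 0 = y * rothe_term Q x y m 0.
Proof. by rewrite /rothe_term !qbin0 !subn0 exprS; ring. Qed.

Lemma rothe_termSS Q x y m j : rothe_term Q x y m.+1 j.+1 =
  y * rothe_term Q x y m j.+1 + x * Q ^+ m * rothe_term Q x y m j.
Proof.
have [lejm | ltmj] := leqP j m; last by rewrite !rothe_term_small ?mulr0 ?addr0 //; lia.
rewrite /rothe_term subSS /= !mulrDr !mulrDl; congr (_ + _).
  have [ltjm | ->] : (j < m)%N \/ j = m by lia.
    by rewrite (_ : m - j = (m - j.+1).+1)%N 1?(exprS y); [ring | lia].
  by rewrite qbin_small // !(mulr0, mul0r).
have eQ : Q ^+ 'C(j.+1, 2) * Q ^+ (m - j) = Q ^+ m * Q ^+ 'C(j, 2).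
  by rewrite -!exprD binS bin1; congr (_ ^+ _); lia.
by rewrite mulrA eQ exprS; ring.
Qed.

Theorem rothe Q x y m :
  \prod_(i < m) (y + x * Q ^+ i) = \sum_(j < m.+1) rothe_term Q x y m j.
Proof.
elim: m => [|m IHm]; first by rewrite big_ord0 big_ord1 /rothe_term qbin0 !expr0 !mulr1.
have shift : \sum_(j < m.+2) rothe_term Q x y m j =
    rothe_term Q x y m 0 + \sum_(j < m.+1) rothe_term Q x y m j.+1.
  by rewrite big_ord_recl; under eq_bigr do rewrite lift0.
have top : \sum_(j < m.+2) rothe_term Q x y m j = \sum_(j < m.+1) rothe_term Q x y m j.
  by rewrite big_ord_recr /= rothe_term_small ?addr0.
rewrite big_ord_recr /= IHm [RHS]big_ord_recl rothe_term0S.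
under [X in y * _ + X]eq_bigr do rewrite lift0 rothe_termSS.
by rewrite big_split /= -!mulr_sumr addrA -mulrDr -shift top; ring.
Qed.

End QBinomial.

Lemma bin2_mul2 k : ('C(k, 2) * 2 + k = k * k)%N.
Proof. by elim: k => [|k IHk] //; rewrite binS bin1 mulnDl; nia. Qed.

(* The triangular number (j - n)(j - n + 1)/2 of the integer j - n. *)
Definition tri (n j : nat) : nat :=
  if (n <= j)%N then 'C(j - n + 1, 2) else 'C(n - j, 2).

Lemma tri_addn n k : tri n (n + k) = 'C(k.+1, 2).
Proof. by rewrite /tri leq_addr addKn addn1. Qed.

Lemma tri_subn n k : (k < n)%N -> tri n (n - k.+1) = 'C(k.+1, 2).
Proof. by move=> ltkn; rewrite /tri ifF ?subKn //; lia. Qed.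

Lemma tri_bound n j : (j <= 2 * n)%N -> (n <= tri n j + minn j (2 * n - j) + 1)%N.
Proof.
move=> lej; rewrite /tri; case: (leqP n j) => [lenj | ltjn].
  have [k ->] : exists k, j = (n + k)%N by exists (j - n)%N; lia.
  rewrite (_ : n + k - n + 1 = k.+1)%N; last lia.
  have -> : minn (n + k) (2 * n - (n + k)) = (n - k)%N by lia.
  by have := bin2_mul2 k.+1; nia.
have [k ->] : exists k, n = (j + k.+1)%N by exists (n - j.+1)%N; lia.
rewrite (_ : j + k.+1 - j = k.+1)%N; last lia.
have -> : minn j (2 * (j + k.+1) - j) = j by lia.
by have := bin2_mul2 k.+1; nia.
Qed.

Lemma tri_exp n j : (j <= 2 * n)%N ->
  ('C(j, 2) + (n - 1) * (2 * n - j) = 3 * 'C(n, 2) + tri n j)%N.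
Proof.
case: n => [|n] lej; first by rewrite (_ : j = 0)%N //; lia.
rewrite /tri subn1 /=; have := bin2_mul2 n.+1.
case: (leqP n.+1 j) => [lenj | ltjn].
  have [k [l [-> e]]] : exists k l, j = (n.+1 + k)%N /\ n.+1 = (k + l)%N.
    by exists (j - n.+1)%N, (n.+1 - (j - n.+1))%N; lia.
  rewrite (_ : n.+1 + k - n.+1 + 1 = k + 1)%N; last lia.
  rewrite (_ : 2 * n.+1 - (n.+1 + k) = l)%N; last lia.
  by have := bin2_mul2 (n.+1 + k); have := bin2_mul2 (k + 1); nia.
have [k ->] : exists k, n = (j + k)%N by exists (n - j)%N; lia.
rewrite (_ : (j + k).+1 - j = k.+1)%N; last lia.
rewrite (_ : 2 * (j + k).+1 - j = j + 2 * k + 2)%N; last lia.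
by have := bin2_mul2 j; have := bin2_mul2 k.+1; nia.
Qed.

Section JacobiTripleProduct.
Variable R : idomainType.
Implicit Types (Q u w : R) (n : nat).

Definition jacobi_prod u w Q n : R :=
  \prod_(i < n) ((w + u * Q ^+ i.+1) * (u + w * Q ^+ i)).

Lemma jacobi_prod_rothe u w Q n :
  Q ^+ (3 * 'C(n.+1, 2)) * jacobi_prod u w Q n.+1 =
  \prod_(i < 2 * n.+1) (w * Q ^+ n + u * Q ^+ i).
Proof.
rewrite (_ : 2 * n.+1 = n.+1 + n.+1)%N; last lia.
rewrite big_split_ord /= /jacobi_prod big_split /=.
have upper : \prod_(i < n.+1) (w * Q ^+ n + u * Q ^+ (n.+1 + i)) =
    Q ^+ (n * n.+1) * \prod_(i < n.+1) (w + u * Q ^+ i.+1).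
  have -> : Q ^+ (n * n.+1) = \prod_(i < n.+1) Q ^+ n.
    by rewrite prodr_const card_ord -exprM.
  by rewrite -big_split; apply: eq_bigr => i _; rewrite addSnnS exprD /=; ring.
have lower : \prod_(i < n.+1) (w * Q ^+ n + u * Q ^+ i) =
    Q ^+ 'C(n.+1, 2) * \prod_(i < n.+1) (u + w * Q ^+ i).
  rewrite -bin2_sum big_mkord -prodrXr [X in _ = _ * X](reindex_inj rev_ord_inj).
  rewrite -big_split /=; apply: eq_bigr => i _; rewrite subSS.
  have -> : Q ^+ n = Q ^+ i * Q ^+ (n - i) by rewrite -exprD subnKC // -ltnS.
  ring.
rewrite upper lower (_ : 3 * 'C(n.+1, 2) = 'C(n.+1, 2) + n * n.+1)%N ?exprD.
  by ring.
by have := bin2_mul2 n.+1; nia.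
Qed.

Theorem jacobi_triple_product_finite u w Q n : Q != 0 ->
  jacobi_prod u w Q n = \sum_(j < (2 * n).+1)
    Q ^+ tri n j * qbin Q (2 * n) j * u ^+ j * w ^+ (2 * n - j).
Proof.
case: n => [|n] Q0; first by rewrite /jacobi_prod big_ord0 big_ord1 /tri /= !expr0 !mulr1.
apply: (mulfI (expf_neq0 (3 * 'C(n.+1, 2)) Q0)).
rewrite jacobi_prod_rothe rothe mulr_sumr; apply: eq_bigr => j _.
have lej : (j <= 2 * n.+1)%N by rewrite -ltnS.
have e := tri_exp lej; rewrite subn1 /= in e.
rewrite /rothe_term exprMn -exprM.
transitivity (Q ^+ ('C(j, 2) + n * (2 * n.+1 - j)) * qbin Q (2 * n.+1) j *
    u ^+ j * w ^+ (2 * n.+1 - j)); first by rewrite exprD; ring.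
by rewrite e exprD; ring.
Qed.

End JacobiTripleProduct.

(** * Truncated infinite products *)

(* Truncations of f_e = prod_(i >= 1) (1 - q^(e i)) and of its inverse. *)
Definition euler_prod (e L : nat) : {poly int} := \prod_(i < L) (1 - 'X^(e * i.+1)).

Definition geom_prod (e L K : nat) : {poly int} :=
  \prod_(i < L) \sum_(j < K) 'X^(e * i.+1 * j).

Lemma qpoch_Xn e L : qpoch 'X^e L = euler_prod e L.
Proof. by apply: eq_bigr => i _; rewrite -exprM. Qed.

Lemma euler_prodS e L : euler_prod e L.+1 = euler_prod e L * (1 - 'X^(e * L.+1)).
Proof. by rewrite /euler_prod big_ord_recr. Qed.

Lemma eqmodX_euler_prod e L L' N : (N <= e * (minn L L').+1)%N ->
  euler_prod e L = euler_prod e L' %[mod 0, 'X^N].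
Proof.
wlog leLL' : L L' / (L <= L')%N.
  move=> hwlog; case/orP: (leq_total L L') => le; first exact: hwlog.
  by rewrite minnC => /(hwlog _ _ le)/eqmodX_sym.
move=> Nmin; rewrite /euler_prod -!(big_mkord xpredT (fun i => 1 - 'X^(e * i.+1))).
rewrite (big_cat_nat (leq0n L) leLL') /= -[X in eqmodX _ _ X _]mulr1.
apply: eqmodXM; first exact: eqmodX_refl.
rewrite big_nat_cond; apply/eqmodX_sym/eqmodX_prod1 => i /andP [/andP [leLi _] _].
apply: eqmodX_1subXn; apply: leq_trans Nmin _.
by rewrite (minn_idPl leLL') leq_mul2l ltnS leLi orbT.
Qed.

Lemma geom_sumXn s K :
  (1 - 'X^s) * \sum_(j < K) 'X^(s * j) = 1 - 'X^(s * K) :> {poly int}.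
Proof.
rewrite exprM -[RHS]opprB subrX1 -mulNr opprB.
by congr (_ * _); apply: eq_bigr => j _; rewrite exprM.
Qed.

Lemma euler_geom_prod e L K N : (0 < e)%N -> (N <= K)%N ->
  euler_prod e L * geom_prod e L K = 1 %[mod 0, 'X^N].
Proof.
move=> e0 NK; rewrite -big_split /=; apply: eqmodX_prod1 => i _.
rewrite geom_sumXn; apply: eqmodX_1subXn; apply: leq_trans NK _.
by rewrite leq_pmull ?muln_gt0 ?e0.
Qed.

Lemma qbin_euler_prod e m j L : (0 < e)%N -> (j <= m)%N -> (minn j (m - j) <= L)%N ->
  qbin 'X^e m j * euler_prod e L = 1 %[mod 0, 'X^(e * (minn j (m - j)).+1)].
Proof.
set s := minn j (m - j) => e0 jm sL.
have toL k : (s <= k)%N -> euler_prod e k = euler_prod e L %[mod 0, 'X^(e * s.+1)].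
  by move=> sk; apply: eqmodX_euler_prod; rewrite leq_mul2l ltnS leq_min sk sL orbT.
apply: (@eqmodX_mulIr _ _ _ (geom_prod e L (e * s.+1))); first exact: euler_geom_prod.
rewrite mul1r; apply: (eqmodX_trans (q := qbin 'X^e m j * euler_prod e j * euler_prod e (m - j))).
  apply: eqmodXM; [apply: eqmodXM; [apply: eqmodX_refl|] |]; apply/eqmodX_sym/toL.
    exact: geq_minl.
  exact: geq_minr.
rewrite -!qpoch_Xn qbin_qpoch // !qpoch_Xn; apply: toL.
exact: leq_trans (geq_minl _ _) jm.
Qed.

Lemma jacobi_prod_euler_prod e n N (u w : {poly int}) : (0 < e)%N -> (N <= e * n)%N ->
  jacobi_prod u w 'X^e n * euler_prod e n =
  \sum_(j < (2 * n).+1) 'X^(e * tri n j) * u ^+ j * w ^+ (2 * n - j) %[mod 0, 'X^N].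
Proof.
move=> e0 Nen; rewrite jacobi_triple_product_finite ?expf_neq0 ?polyX_eq0 //.
rewrite mulr_suml; apply: eqmodX_sum => j _.
have lej : (j <= 2 * n)%N by rewrite -ltnS.
set s := minn j (2 * n - j); set c := u ^+ j * w ^+ (2 * n - j).
have -> : 'X^e ^+ tri n j * qbin 'X^e (2 * n) j * u ^+ j * w ^+ (2 * n - j) *
    euler_prod e n = 'X^(e * tri n j) * (c * (qbin 'X^e (2 * n) j * euler_prod e n)).
  by rewrite exprM /c; ring.
have -> : 'X^(e * tri n j) * u ^+ j * w ^+ (2 * n - j) = 'X^(e * tri n j) * (c * 1).
  by rewrite /c; ring.
apply: (@eqmodX_leq _ (e * s.+1 + e * tri n j)).
  have := tri_bound lej; rewrite -/s => tb.
  by apply: leq_trans Nen _; rewrite -mulnDr leq_mul2l; apply/orP; right; lia.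
apply/eqmodX_mulXn/eqmodXM; first exact: eqmodX_refl.
by apply: qbin_euler_prod; rewrite ?subKn //; lia.
Qed.

(** * The identities of Gauss, Jacobi and Euler *)

Lemma sum_ord_mid (V : nmodType) n (F : nat -> V) :
  \sum_(j < (2 * n).+1) F j = \sum_(k < n) F (n - k.+1)%N + \sum_(k < n.+1) F (n + k)%N.
Proof.
rewrite (_ : (2 * n).+1 = n + n.+1)%N; last lia.
by rewrite big_split_ord /= (reindex_inj rev_ord_inj).
Qed.

Lemma signr_subn (R : nzRingType) n k :
  (k <= n)%N -> (-1) ^+ (n - k) = (-1) ^+ n * (-1) ^+ k :> R.
Proof.
by move=> kn; rewrite -[in RHS](subnK kn) exprD -mulrA -expr2 sqrr_sign mulr1.
Qed.

Lemma euler_prod_split2 e n : euler_prod e (2 * n) =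
  \prod_(i < n) (1 - 'X^(e * (2 * i).+1)) * euler_prod (2 * e) n.
Proof.
elim: n => [|n IHn]; first by rewrite /euler_prod !big_ord0 mulr1.
rewrite (_ : 2 * n.+1 = (2 * n).+2)%N; last lia.
rewrite !euler_prodS IHn big_ord_recr /= (_ : e * (2 * n).+2 = 2 * e * n.+1)%N; last lia.
ring.
Qed.

Lemma euler_prod_split3 e n : euler_prod e (3 * n) =
  \prod_(i < n) ((1 - 'X^(e * (3 * i).+1)) * (1 - 'X^(e * (3 * i).+2))) *
  euler_prod (3 * e) n.
Proof.
elim: n => [|n IHn]; first by rewrite /euler_prod !big_ord0 mulr1.
rewrite (_ : 3 * n.+1 = (3 * n).+3)%N; last lia.
rewrite !euler_prodS IHn big_ord_recr /= (_ : e * (3 * n).+3 = 3 * e * n.+1)%N; last lia.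
ring.
Qed.

(* Truncations of phi(-q^e) = sum_(k in Z) (-1)^k q^(e k^2) and of
   psi(q^e) = sum_(k >= 0) q^(e k(k+1)/2). *)
Definition theta e n : {poly int} :=
  1 + (\sum_(k < n) (-1) ^+ k.+1 * 'X^(e * k.+1 ^ 2)) *+ 2.

Definition psi e n : {poly int} := \sum_(k < n) 'X^(e * 'C(k.+1, 2)).

Lemma jacobi_prod_theta e n :
  jacobi_prod (-1 : {poly int}) 'X^e 'X^(2 * e) n =
  (- 'X^e) ^+ n * (\prod_(i < n) (1 - 'X^(e * (2 * i).+1))) ^+ 2.
Proof.
have -> : (- 'X^e) ^+ n = \prod_(i < n) (- 'X^e : {poly int}).
  by rewrite prodr_const card_ord.
rewrite /jacobi_prod -prodrXl -big_split /=; apply: eq_bigr => i _.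
rewrite -!exprM -exprD (_ : 2 * e * i.+1 = e + e * (2 * i).+1)%N; last lia.
rewrite (_ : e + 2 * e * i = e * (2 * i).+1)%N; last lia.
by rewrite exprD; ring.
Qed.

Lemma jacobi_sum_theta e n :
  \sum_(j < (2 * n).+1) 'X^(2 * e * tri n j) * (-1) ^+ j * 'X^e ^+ (2 * n - j) =
  (- 'X^e) ^+ n * theta e n.
Proof.
pose F j := 'X^(2 * e * tri n j) * (-1) ^+ j * 'X^e ^+ (2 * n - j) : {poly int}.
have Flo k : (k < n)%N ->
    F (n - k.+1)%N = (-1) ^+ n * 'X^(e * n) * ((-1) ^+ k.+1 * 'X^(e * k.+1 ^ 2)).
  move=> ltkn; rewrite /F tri_subn // signr_subn // -exprM.
  transitivity ((-1) ^+ n * (-1) ^+ k.+1 *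
      'X^(2 * e * 'C(k.+1, 2) + e * (2 * n - (n - k.+1))) : {poly int}).
    by rewrite exprD; ring.
  rewrite (_ : _ + _ = e * n + e * k.+1 ^ 2)%N ?exprD; first by ring.
  by have := bin2_mul2 k.+1; nia.
have Fhi k : (k <= n)%N ->
    F (n + k)%N = (-1) ^+ n * 'X^(e * n) * ((-1) ^+ k * 'X^(e * k ^ 2)).
  move=> lekn; rewrite /F tri_addn exprD -exprM.
  transitivity ((-1) ^+ n * (-1) ^+ k *
      'X^(2 * e * 'C(k.+1, 2) + e * (2 * n - (n + k))) : {poly int}).
    by rewrite exprD; ring.
  rewrite (_ : _ + _ = e * n + e * k ^ 2)%N ?exprD; first by ring.
  by have := bin2_mul2 k.+1; nia.
rewrite (sum_ord_mid n F) (eq_bigr _ (fun (k : 'I_n) _ => Flo k (ltn_ord k))).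
rewrite (eq_bigr _ (fun (k : 'I_n.+1) _ => Fhi k (ltn_ord k))) -!mulr_sumr big_ord_recl /=.
rewrite /theta (exprNn ('X^e)) -exprM expr0 mul1r muln0 expr0.
set S := \sum_(i < n) (-1) ^+ i.+1 * 'X^(e * i.+1 ^ 2).
ring.
Qed.

Theorem gauss_theta e n N : (0 < e)%N -> (N <= e * n)%N ->
  euler_prod e (2 * n) ^+ 2 = euler_prod (2 * e) n * theta e n %[mod 0, 'X^N].
Proof.
move=> e0 Nen; pose O : {poly int} := \prod_(i < n) (1 - 'X^(e * (2 * i).+1)).
have : O ^+ 2 * euler_prod (2 * e) n = theta e n %[mod 0, 'X^N].
  apply: (@eqmodX_mulNXnK _ _ e n); rewrite mulrA /O -jacobi_prod_theta -jacobi_sum_theta.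
  by apply: jacobi_prod_euler_prod; [rewrite muln_gt0 e0 | lia].
rewrite euler_prod_split2 -/O exprMn (expr2 (euler_prod _ n)) mulrA (mulrC _ (theta e n)).
by move=> h; apply: eqmodXM h _; apply: eqmodX_refl.
Qed.

Definition euler_prod_plus (e L : nat) : {poly int} := \prod_(i < L) (1 + 'X^(e * i.+1)).

Lemma jacobi_prod_psi e n :
  jacobi_prod 1 1 'X^e n.+1 = (euler_prod_plus e n.+1 * euler_prod_plus e n) *+ 2.
Proof.
rewrite /jacobi_prod big_split /= [X in _ * X]big_ord_recl /= expr0 mulr1 -mulrnAr.
congr (_ * _); first by apply: eq_bigr => i _; rewrite mul1r -exprM.
by rewrite -mulr_natl; congr (_ * _); apply: eq_bigr => i _; rewrite mul1r -exprM.
Qed.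

Lemma jacobi_sum_psi e n :
  \sum_(j < (2 * n).+1) 'X^(e * tri n j) * 1 ^+ j * 1 ^+ (2 * n - j) =
  psi e n *+ 2 + 'X^(e * 'C(n.+1, 2)) :> {poly int}.
Proof.
rewrite (sum_ord_mid n (fun j => 'X^(e * tri n j) * 1 ^+ j * 1 ^+ (2 * n - j))).
rewrite big_ord_recr /= tri_addn !expr1n !mulr1 addrA mulr2n; congr (_ + _ + _).
  by apply: eq_bigr => k _; rewrite tri_subn ?expr1n ?mulr1.
by apply: eq_bigr => k _; rewrite tri_addn !expr1n !mulr1.
Qed.

Theorem psi_prod e n N : (0 < e)%N -> (N <= e * n.+1)%N ->
  psi e n.+1 = euler_prod_plus e n.+1 * euler_prod_plus e n * euler_prod e n.+1
    %[mod 0, 'X^N].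
Proof.
move=> e0 Nen; have := @jacobi_prod_euler_prod e n.+1 N 1 1 e0 Nen.
rewrite jacobi_prod_psi jacobi_sum_psi mulrnAl => h; apply/eqmodX_sym/eqmodX_half.
apply: eqmodX_trans h _; rewrite -[X in eqmodX _ _ _ X]addr0.
apply/eqmodXD/eqmodX_Xn; first exact: eqmodX_refl.
by apply: leq_trans Nen _; rewrite leq_mul2l; have := bin2_mul2 n.+2; nia.
Qed.

(* The generalized pentagonal number k(3k+1)/2 of the integer k = j - n. *)
Definition pent n j : nat := 3 * tri n j + (2 * n - j) - n.

Definition pent_series e n : {poly int} :=
  \sum_(j < (2 * n).+1) (-1) ^+ (j + n) * 'X^(e * pent n j).

Lemma pent_addn n j : (j <= 2 * n)%N -> (n + pent n j = 3 * tri n j + (2 * n - j))%N.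
Proof.
move=> lej; rewrite /pent subnKC //; case: (leqP j n) => [|ltnj]; first lia.
have [k ->] : exists k, j = (n + k)%N by exists (j - n)%N; lia.
by rewrite tri_addn; have := bin2_mul2 k.+1; nia.
Qed.

Lemma pent_sqr n j : (j <= 2 * n)%N -> exists x, (24 * pent n j + 1 = x ^ 2)%N.
Proof.
move=> lej; case: (leqP n j) => [lenj | ltjn].
  have [k jE] : exists k, j = (n + k)%N by exists (j - n)%N; lia.
  subst j; exists (6 * k + 1)%N; rewrite /pent tri_addn.
  have := bin2_mul2 k.+1; set c := 'C(k.+1, 2) => c2.
  have kc : (k <= 3 * c)%N by nia.
  have -> : (3 * c + (2 * n - (n + k)) - n = 3 * c - k)%N by lia.
  by rewrite -mulnn; nia.
have [k [ltkn ->]] : exists k, (k < n)%N /\ j = (n - k.+1)%N.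
  by exists (n - j.+1)%N; lia.
exists (6 * k + 5)%N; rewrite /pent tri_subn //.
have := bin2_mul2 k.+1; set c := 'C(k.+1, 2) => c2.
have -> : (3 * c + (2 * n - (n - k.+1)) - n = 3 * c + k.+1)%N by lia.
by rewrite -mulnn; nia.
Qed.

Lemma jacobi_prod_pent e n :
  jacobi_prod (-1 : {poly int}) 'X^e 'X^(3 * e) n = (- 'X^e) ^+ n *
    \prod_(i < n) ((1 - 'X^(e * (3 * i).+1)) * (1 - 'X^(e * (3 * i).+2))).
Proof.
have -> : (- 'X^e) ^+ n = \prod_(i < n) (- 'X^e : {poly int}).
  by rewrite prodr_const card_ord.
rewrite /jacobi_prod -big_split /=; apply: eq_bigr => i _.
rewrite -!exprM -exprD (_ : 3 * e * i.+1 = e + e * (3 * i).+2)%N; last lia.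
rewrite (_ : e + 3 * e * i = e * (3 * i).+1)%N; last lia.
by rewrite exprD; ring.
Qed.

Lemma jacobi_sum_pent e n :
  \sum_(j < (2 * n).+1) 'X^(3 * e * tri n j) * (-1) ^+ j * 'X^e ^+ (2 * n - j) =
  (- 'X^e) ^+ n * pent_series e n.
Proof.
rewrite /pent_series mulr_sumr; apply: eq_bigr => j _.
have lej : (j <= 2 * n)%N by rewrite -ltnS.
rewrite (exprNn ('X^e)) -!exprM.
transitivity ((-1) ^+ j * 'X^(3 * e * tri n j + e * (2 * n - j)) : {poly int}).
  by rewrite exprD; ring.
rewrite (_ : _ + _ = e * n + e * pent n j)%N; last first.
  by rewrite -mulnDr pent_addn // mulnDr mulnA (mulnC e 3).
have -> : (-1) ^+ j = (-1) ^+ n * (-1) ^+ (j + n) :> {poly int}.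
  by rewrite exprD mulrCA -expr2 sqrr_sign mulr1.
by rewrite (exprD 'X); ring.
Qed.

Theorem euler_pentagonal e n N : (0 < e)%N -> (N <= 2 * e * n)%N ->
  euler_prod e (3 * n) = pent_series e n %[mod 0, 'X^N].
Proof.
move=> e0 Nen; apply: (@eqmodX_mulNXnK _ _ e n).
rewrite euler_prod_split3 mulrA -jacobi_prod_pent -jacobi_sum_pent.
by apply: jacobi_prod_euler_prod; [rewrite muln_gt0 e0 | lia].
Qed.

Lemma coef_pent_series e n i :
  (forall j, (j <= 2 * n)%N -> i != (e * pent n j)%N) -> (pent_series e n)`_i = 0.
Proof.
move=> ne; rewrite /pent_series coef_sum big1 // => j _.
have /ne/negPf neq := ltn_ord j.
by rewrite -signr_odd mulr_sign; case: ifP; rewrite ?coefN coefXn neq ?oppr0.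
Qed.

(** * Congruences modulo 2 and 4 *)

Lemma euler_prod_plus_mod2 e L N :
  euler_prod_plus e L = euler_prod e L %[mod 2, 'X^N].
Proof.
apply: eqmodX_prod => i _.
by rewrite (_ : 1 + 'X^_ = 1 - 'X^(e * i.+1) + 'X^(e * i.+1) *+ 2);
  [apply: eqmodX_addrMn | ring].
Qed.

Lemma euler_prod_sqr_mod2 e L N :
  euler_prod e L ^+ 2 = euler_prod (2 * e) L %[mod 2, 'X^N].
Proof.
rewrite -prodrXl; apply: eqmodX_prod => i _; set y := 'X^(e * i.+1).
rewrite (_ : 2 * e * i.+1 = e * i.+1 * 2)%N ?(exprM 'X (e * i.+1) 2) -/y; last lia.
by rewrite (_ : (1 - y) ^+ 2 = 1 - y ^+ 2 + (y ^+ 2 - y) *+ 2);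
  [apply: eqmodX_addrMn | ring].
Qed.

Lemma euler_prod_4th_mod4 e L N :
  euler_prod e L ^+ 4 = euler_prod (2 * e) L ^+ 2 %[mod 4, 'X^N].
Proof.
rewrite -!prodrXl; apply: eqmodX_prod => i _; set y := 'X^(e * i.+1).
rewrite (_ : 2 * e * i.+1 = e * i.+1 * 2)%N ?(exprM 'X (e * i.+1) 2) -/y; last lia.
by rewrite (_ : (1 - y) ^+ 4 = (1 - y ^+ 2) ^+ 2 + (- y + y ^+ 2 *+ 2 - y ^+ 3) *+ 4);
  [apply: eqmodX_addrMn | ring].
Qed.

Lemma eqmodX_signr_muln2 N s p : ((-1) ^+ s * p) *+ 2 = p *+ 2 %[mod 4, 'X^N].
Proof.
rewrite -signr_odd; case: (odd s); last by rewrite expr0 mul1r; apply: eqmodX_refl.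
by rewrite expr1 mulN1r (_ : (- p) *+ 2 = p *+ 2 + (- p) *+ 4);
  [apply: eqmodX_addrMn | ring].
Qed.

Lemma theta_mod4 e n N :
  theta e n = 1 + (\sum_(k < n) 'X^(e * k.+1 ^ 2)) *+ 2 %[mod 4, 'X^N].
Proof.
apply: eqmodXD; first exact: eqmodX_refl.
by rewrite -!sumrMnl; apply: eqmodX_sum => k _; apply: eqmodX_signr_muln2.
Qed.

Lemma sum_ord_mul2 (V : nmodType) M (F : nat -> V) :
  \sum_(k < 2 * M) F k = \sum_(i < M) F (2 * i)%N + \sum_(i < M) F (2 * i).+1.
Proof.
elim: M => [|M IHM]; first by rewrite muln0 !big_ord0 addr0.
rewrite (_ : 2 * M.+1 = (2 * M).+2)%N; last lia.
by rewrite !big_ord_recr /= IHM -addrA addrACA.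
Qed.

Lemma theta_dissection_mod4 M N :
  theta 1 (2 * M) = theta 4 M + ('X * psi 8 M) *+ 2 %[mod 4, 'X^N].
Proof.
apply: eqmodX_trans (theta_mod4 _ _ _) _; apply: eqmodX_sym.
apply: eqmodX_trans (eqmodXD (theta_mod4 _ _ N) (eqmodX_refl _ _ _)) _.
rewrite (sum_ord_mul2 M (fun k => 'X^(1 * k.+1 ^ 2))) /psi mulr_sumr.
have odd_sq i : 'X^(1 * (2 * i).+1 ^ 2) = 'X * 'X^(8 * 'C(i.+1, 2)) :> {poly int}.
  by rewrite -exprS; congr 'X^_; have := bin2_mul2 i.+1; nia.
have even_sq i : 'X^(1 * (2 * i).+2 ^ 2) = 'X^(4 * i.+1 ^ 2) :> {poly int}.
  by congr 'X^_; nia.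
rewrite (eq_bigr _ (fun (i : 'I_M) _ => odd_sq i)).
rewrite (eq_bigr _ (fun (i : 'I_M) _ => even_sq i)).
by apply: eqmodX_eq; rewrite mulrnDl; ring.
Qed.

Lemma d_euler_geom k n :
  d k n = (euler_prod 2 n ^+ k * geom_prod 1 n n.+1 ^+ (3 * k + 1))`_n.
Proof.
have -> : geom_prod 1 n n.+1 = \prod_(i < n) \sum_(j < n.+1) 'X^(i.+1 * j).
  by apply: eq_bigr => i _; apply: eq_bigr => j _; rewrite mul1n.
by rewrite /d big_split /= !prodrXl.
Qed.

Lemma gf_frobenius_mod4 L K N : (N <= K)%N ->
  euler_prod 2 L ^+ 7 * geom_prod 1 L K ^+ 22 =
  euler_prod 1 L ^+ 2 * geom_prod 2 L K ^+ 5 %[mod 4, 'X^N].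
Proof.
move=> NK; have FH e : (0 < e)%N -> euler_prod e L * geom_prod e L K = 1 %[mod 0, 'X^N].
  by move=> e0; apply: euler_geom_prod.
set F1 := euler_prod 1 L; set F2 := euler_prod 2 L.
set H1 := geom_prod 1 L K; set H2 := geom_prod 2 L K.
apply: (@eqmodX_mulIr _ _ (F1 ^+ 22 * F2 ^+ 5) (H1 ^+ 22 * H2 ^+ 5)).
  rewrite (_ : _ * _ = (F1 * H1) ^+ 22 * (F2 * H2) ^+ 5); last by ring.
  by rewrite -(mulr1 1); apply: eqmodXM; apply/eqmodX_exp1/FH.
apply: (@eqmodX_trans _ _ (F2 ^+ 12)).
  rewrite (_ : _ * _ = F2 ^+ 12 * (F1 * H1) ^+ 22); last by ring.
  by apply/eqmodX_mulr1/eqmodX_exp1/FH.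
rewrite (_ : _ * (_ * _) = (F1 ^+ 4) ^+ 6 * (F2 * H2) ^+ 5); last by ring.
apply: (@eqmodX_trans _ _ ((F1 ^+ 4) ^+ 6)).
  by rewrite (_ : 12 = 2 * 6)%N // exprM; apply/eqmodX_exp/eqmodX_sym/euler_prod_4th_mod4.
by apply: eqmodX_sym; apply/eqmodX_mulr1/eqmodX_exp1/FH.
Qed.

Lemma gf_gauss t K N : (N <= K)%N -> (N <= t.+1)%N ->
  euler_prod 1 t ^+ 2 * geom_prod 2 t K ^+ 5 =
  theta 1 (2 * N) * geom_prod 2 t K ^+ 4 %[mod 0, 'X^N].
Proof.
move=> NK Nt; set H2 := geom_prod 2 t K.
have F1 : euler_prod 1 t = euler_prod 1 (2 * (2 * N)) %[mod 0, 'X^N].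
  by apply: eqmodX_euler_prod; lia.
have F2 : euler_prod 2 (2 * N) = euler_prod 2 t %[mod 0, 'X^N].
  by apply: eqmodX_euler_prod; lia.
have F2H2 : euler_prod 2 t * H2 = 1 %[mod 0, 'X^N] by apply: euler_geom_prod.
apply: (@eqmodX_trans _ _ (euler_prod 2 t * theta 1 (2 * N) * H2 ^+ 5)).
  apply: eqmodXM; last exact: eqmodX_refl.
  apply: eqmodX_trans (eqmodX_exp 2 F1) _.
  apply: eqmodX_trans (@gauss_theta 1 (2 * N) N isT _) _; first lia.
  by apply: eqmodXM F2 (eqmodX_refl _ _ _).
rewrite (_ : _ * _ * _ = theta 1 (2 * N) * H2 ^+ 4 * (euler_prod 2 t * H2)); last by ring.
exact: eqmodX_mulr1.
Qed.

Lemma gf_psi8_mod2 L K N : (N <= K)%N -> (N <= L.+1)%N ->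
  psi 8 L.+1 * geom_prod 2 L K ^+ 4 = euler_prod 16 L %[mod 2, 'X^N].
Proof.
move=> NK NL; set F2 := euler_prod 2 L; set H2 := geom_prod 2 L K.
set F8 := euler_prod 8 L.
have F2H2 : F2 * H2 = 1 %[mod 0, 'X^N] by apply: euler_geom_prod.
have F8S : euler_prod 8 L.+1 = F8 %[mod 2, 'X^N].
  by apply/eqmodX0/eqmodX_euler_prod; rewrite (minn_idPr (leqnSn L)); lia.
apply: (@eqmodX_mulIr _ _ (F2 ^+ 4) (H2 ^+ 4)).
  by rewrite -exprMn; apply: eqmodX_exp1.
apply: (@eqmodX_trans _ _ (F8 ^+ 3)).
  rewrite -mulrA (mulrC (H2 ^+ 4)) -exprMn.
  apply: eqmodX_trans (eqmodX_mulr1 _ _ (eqmodX_exp1 4 F2H2)) _.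
  apply: eqmodX_trans (eqmodX0 _ (@psi_prod 8 L N isT _)) _; first lia.
  rewrite (_ : F8 ^+ 3 = F8 * F8 * F8); last by ring.
  apply: eqmodXM; last exact: F8S.
  apply: eqmodXM; last exact: euler_prod_plus_mod2.
  exact: eqmodX_trans (euler_prod_plus_mod2 _ _ _) F8S.
apply: eqmodX_sym; rewrite (_ : F8 ^+ 3 = F8 ^+ 2 * F8); last by ring.
apply: eqmodXM; first exact/eqmodX_sym/euler_prod_sqr_mod2.
rewrite (_ : 4 = 2 * 2)%N // exprM.
apply: eqmodX_trans (eqmodX_exp 2 (euler_prod_sqr_mod2 _ _ _)) _.
exact: euler_prod_sqr_mod2.
Qed.

Lemma gf_d7_mod4 t :
  euler_prod 2 t ^+ 7 * geom_prod 1 t t.+1 ^+ 22 =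
  theta 4 t.+1 * geom_prod 2 t t.+1 ^+ 4 + ('X * pent_series 16 t.+1) *+ 2
    %[mod 4, 'X^t.+1].
Proof.
set N := t.+1; set H2 := geom_prod 2 t N.
apply: eqmodX_trans (gf_frobenius_mod4 _ (leqnn N)) _.
apply: eqmodX_trans (eqmodX0 _ (gf_gauss (leqnn N) (leqnn N))) _.
apply: eqmodX_trans (eqmodXM (theta_dissection_mod4 _ _) (eqmodX_refl _ _ (H2 ^+ 4))) _.
rewrite mulrDl mulrnAl -mulrA; apply: eqmodXD; first exact: eqmodX_refl.
apply: eqmodX_muln2; apply: eqmodXM; first exact: eqmodX_refl.
apply: eqmodX_trans (gf_psi8_mod2 (leqnn N) (leqnn N)) _.
apply/eqmodX0/(eqmodX_trans (q := euler_prod 16 (3 * N))).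
  by apply: eqmodX_euler_prod; lia.
by apply: euler_pentagonal; lia.
Qed.

Lemma coef_comp_X2_odd (p : {poly int}) i : odd i -> (p \Po 'X^2)`_i = 0.
Proof. by move=> oi; rewrite coef_comp_poly_Xn // dvdn2 oi. Qed.

Lemma theta_comp_X2 e n : theta e n \Po 'X^2 = theta (e * 2) n.
Proof.
rewrite /theta rmorphD rmorph1 rmorphMn rmorph_sum /=; congr (_ + _ *+ 2).
apply: eq_bigr => k _; rewrite rmorphM rmorphXn rmorphN rmorph1 /= comp_Xn_poly -exprM.
by rewrite mulnCA mulnA.
Qed.

Lemma geom_prod_comp_X2 e L K : geom_prod e L K \Po 'X^2 = geom_prod (e * 2) L K.
Proof.
rewrite /geom_prod rmorph_prod; apply: eq_bigr => i _; rewrite rmorph_sum.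
by apply: eq_bigr => j _; rewrite /= comp_Xn_poly -exprM; congr 'X^_; lia.
Qed.

Lemma coef_theta_geom_odd t N i : odd i -> (theta 4 N * geom_prod 2 t N ^+ 4)`_i = 0.
Proof.
move=> oi; rewrite -(theta_comp_X2 2) -(geom_prod_comp_X2 1) -rmorphXn -rmorphM.
exact: coef_comp_X2_odd.
Qed.

Theorem theorem3p5 (p r : nat) :
  prime p -> (5 <= p)%N -> (1 <= r <= p - 1)%N ->
  ~ (exists x : nat, (x ^ 2 = 3 * r + 1 %[mod p])%N) ->
  forall n : nat, (4 %| d 7 (2 * p * n + 2 * r + 1))%Z.
Proof.
move=> _ _ _ nonres n; set m := (p * n + r)%N.
have -> : (2 * p * n + 2 * r + 1 = (2 * m).+1)%N by rewrite /m; lia.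
have pent0 : (pent_series 16 (2 * m).+2)`_(2 * m) = 0.
  apply: coef_pent_series => j lej; apply/eqP => e2m; apply: nonres.
  have [x sq] := pent_sqr lej; exists x; rewrite -sq.
  move: e2m; set P := pent _ j => e2m.
  have -> : (24 * P + 1 = 3 * n * p + (3 * r + 1))%N by rewrite /m in e2m; lia.
  by rewrite modnMDl.
rewrite d_euler_geom; have /eqmodXP/(_ _ (ltnSn _)) := gf_d7_mod4 (2 * m).+1.
by rewrite coefD coefMn coefXM /= pent0 mul0rn addr0 coef_theta_geom_odd ?subr0 // oddS oddM.
Qed.
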